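(* Let $k\geq2$ and let $L=(l_1,\dots,l_k)$ be generic and reduced positive integers with sum $n$. Fix $i\in[k]$, let $d=\gcd(n,l_i)$ and $q=n/d$. For $v\in\mathbb{Z}_n$ let ${}_vE_i^q$ be the closed edge-path starting at $v$ and making $q$ consecutive steps of type $i$ (through $v,v+l_i,\dots,v+ql_i=v$). Then all the cycles ${}_vE_i^q$, $v\in\mathbb{Z}_n$, are homologous in $Tonn^{n,k}(L)$.
   Context: $L$ is generic if for all $I,J\subseteq[k]$, $\sum_{i\in I}l_i=\sum_{j\in J}l_j$ implies $I=J$; reduced if $\gcd(l_1,\dots,l_k)=1$. The generalized tonnetz $Tonn^{n,k}(L)$ is the simplicial complex on vertex set $\mathbb{Z}_n$ whose maximal simplices are $\Delta(x;\sigma)=\{x,\,x+l_{\sigma(1)},\dots,x+l_{\sigma(1)}+\dots+l_{\sigma(k-1)}\}$ for $x\in\mathbb{Z}_n$, $\sigma\in S_k$. A step of type $i$ from a vertex $y$ is the oriented 1-simplex from $y$ to $y+l_i$. *)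

From HB Require Import structures.
From mathcomp Require Import all_boot all_order all_algebra all_fingroup.
Set Implicit Arguments. Unset Strict Implicit. Unset Printing Implicit Defensive.
Import GRing.Theory.
Local Open Scope ring_scope.

Definition generic (k : nat) (l : 'I_k -> nat) : Prop :=
  forall I J : {set 'I_k},
    (\sum_(i in I) l i)%N = (\sum_(j in J) l j)%N -> I = J.

Definition reduced (k : nat) (l : 'I_k -> nat) : Prop :=
  \big[gcdn/0%N]_(i < k) l i = 1%N.

(* Maximal simplex Delta(x; sigma) of Tonn^{n,k}(L), vertices in Z_n
   (n >= 2 is assumed wherever this is used, so 'Z_n is Z/nZ). *)
Definition max_simplex (n k : nat) (l : 'I_k -> nat) (x : 'Z_n) (s : 'S_k)
  : {set 'Z_n} :=
  [set x + ((\sum_(t < k | (t < j)%N) l (s t))%N)%:R | j : 'I_k].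

Definition is_face (n k : nat) (l : 'I_k -> nat) (S : {set 'Z_n}) : Prop :=
  exists (x : 'Z_n) (s : 'S_k), S \subset max_simplex l x s.

(* Integral simplicial 1-chains: the oriented edge [a,b] is encoded as the
   antisymmetric function e_(a,b) - e_(b,a) on ordered pairs. *)
Definition chain1 (n : nat) := 'Z_n * 'Z_n -> int.

Definition edge (n : nat) (a b : 'Z_n) : chain1 n :=
  fun p => ((p == (a, b)) : int) - ((p == (b, a)) : int).

Definition bd2 (n : nat) (a b c : 'Z_n) : chain1 n :=
  fun p => edge a b p + edge b c p + edge c a p.

Definition homologous (n k : nat) (l : 'I_k -> nat) (z1 z2 : chain1 n) : Prop :=
  exists s : seq (int * ('Z_n * 'Z_n * 'Z_n)),
    (forall t, t \in s -> is_face l [set t.2.1.1; t.2.1.2; t.2.2]) /\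
    forall p, z1 p - z2 p =
      \sum_(t <- s) t.1 * bd2 t.2.1.1 t.2.1.2 t.2.2 p.

Definition Ecycle (n k : nat) (l : 'I_k -> nat) (i : 'I_k) (v : 'Z_n)
  : chain1 n :=
  let q := (n %/ gcdn n (l i))%N in
  fun p => \sum_(j < q)
    edge (v + (j * l i)%N%:R) (v + (j.+1 * l i)%N%:R) p.

From HB Require Import structures.
From mathcomp Require Import all_boot all_order all_algebra all_fingroup.
From mathcomp Require Import ring zify.

Set Implicit Arguments.
Unset Strict Implicit.
Unset Printing Implicit Defensive.

(* Moving the base point of [_vE_i^q] by one step [l_j] of another type is a
   homology: the strip between the two cycles is tiled by the triangles
   [y, y + l_i, y + l_i + l_j] and [y, y + l_j, y + l_j + l_i], both faces of
   the tonnetz, and the transversal edges [y, y + l_j] telescope away because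
   the cycle is closed.  The shifts realising homologies form a subgroup of
   Z_n; it contains every l_j with j <> i, hence l_i = -(sum of the others),
   hence gcd(l_1, ..., l_k) = 1, so it is all of Z_n. *)

Import GRing.Theory.
Local Open Scope ring_scope.

Section AdditiveClosure.

Variables (V : zmodType) (S : V -> Prop).
Hypothesis S0 : S 0.
Hypothesis SD : forall x y, S x -> S y -> S (x + y).
Hypothesis SN : forall x, S x -> S (- x).

Lemma closed_mulrn x m : S x -> S (x *+ m).
Proof. by move=> Sx; elim: m => [|m IHm]; [rewrite mulr0n | rewrite mulrS; exact: SD]. Qed.

Lemma closed_mulrn_gcdn x a b : S (x *+ a) -> S (x *+ b) -> S (x *+ gcdn a b).
Proof.
move=> Sa Sb; have [->|a_gt0] := posnP a; first by rewrite gcd0n.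
case: (Bezoutl b a_gt0) => c _ /dvdnP [e Bezout_ab].
have -> : x *+ gcdn a b = x *+ a *+ e - x *+ b *+ c.
  by rewrite -!mulrnA [(a * e)%N]mulnC -Bezout_ab [(b * c)%N]mulnC mulrnDr addrK.
by apply: SD; [exact: closed_mulrn | apply/SN/closed_mulrn].
Qed.

Lemma closed_mulrn_big_gcdn (I : Type) (r : seq I) (P : pred I) (F : I -> nat) x :
  (forall j, P j -> S (x *+ F j)) -> S (x *+ \big[gcdn/0%N]_(j <- r | P j) F j).
Proof.
move=> SF; apply: (big_ind (fun m => S (x *+ m))) => //.
exact: closed_mulrn_gcdn.
Qed.

End AdditiveClosure.

Section Homology.

Variables (k : nat) (l : 'I_k -> nat) (n : nat).

Lemma homologous_refl (z : chain1 n) : homologous l z z.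
Proof. by exists [::]; split => // p; rewrite subrr big_nil. Qed.

Lemma homologous_sym (z1 z2 : chain1 n) :
  homologous l z1 z2 -> homologous l z2 z1.
Proof.
case=> s [s_faces z12]; exists [seq (- t.1, t.2) | t <- s]; split.
- by move=> t /mapP [u us ->]; exact: s_faces u us.
- move=> p; rewrite big_map -opprB z12 -sumrN.
  by apply: eq_bigr => t _; rewrite mulNr.
Qed.

Lemma homologous_trans (z1 z2 z3 : chain1 n) :
  homologous l z1 z2 -> homologous l z2 z3 -> homologous l z1 z3.
Proof.
case=> s1 [s1_faces z12] [s2 [s2_faces z23]]; exists (s1 ++ s2); split.
- by move=> t; rewrite mem_cat => /orP [] ?; [exact: s1_faces|exact: s2_faces].
- by move=> p; rewrite big_cat /= -z12 -z23 addrA subrK.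
Qed.

End Homology.

Lemma edge_parallelogram n (y a b : 'Z_n) (p : 'Z_n * 'Z_n) :
  edge y (y + a) p - edge (y + b) (y + b + a) p =
  bd2 y (y + a) (y + a + b) p - bd2 y (y + b) (y + b + a) p
  + (edge y (y + b) p - edge (y + a) (y + a + b) p).
Proof. by rewrite /bd2 (addrAC y a b); ring. Qed.

Section Tonnetz.

Variables (k : nat) (l : 'I_k.+2 -> nat) (n : nat).
Hypothesis sum_l : n = (\sum_(t < k.+2) l t)%N.
Hypothesis n_gt1 : (1 < n)%N.

Lemma Zp_sum_l : ((\sum_(t < k.+2) l t)%N%:R : 'Z_n) = 0.
Proof. by rewrite -sum_l pchar_Zp. Qed.

Lemma is_face_two_steps (x : 'Z_n) (i j : 'I_k.+2) : i != j ->
  is_face l [set x; x + (l i)%:R; x + (l i)%:R + (l j)%:R].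
Proof.
move=> ij; pose j' := tperm ord0 i j.
have j'_neq0 : j' != ord0.
  by rewrite -(inj_eq (@perm_inj _ (tperm ord0 i))) tpermK tpermL eq_sym.
pose s := (tperm (lift ord0 ord0) j' * tperm ord0 i)%g.
have s0 : s ord0 = i by rewrite permM (@tpermD _ (lift ord0 ord0) j') // tpermL.
have s1 : s (lift ord0 ord0) = j by rewrite permM tpermL tpermK.
exists x, s; apply/subsetP => z; rewrite !inE => /orP [/orP [] | ] /eqP ->.
- by apply/imsetP; exists ord0; rewrite // big1 ?addr0.
- apply/imsetP; exists (lift ord0 ord0) => //.
  by rewrite big_mkcond big_ord_recl /= big1 ?addn0 ?s0.
- apply/imsetP; have [k_gt0|k_le0] := ltnP 0 k.
    exists (Ordinal (k_gt0 : (2 < k.+2)%N)) => //.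
    by rewrite big_mkcond !big_ord_recl /= big1 ?addn0 // s0 s1 natrD addrA.
  (* for k + 2 = 2 the third vertex wraps around to x *)
  exists ord0; rewrite // big1 // addr0 -addrA -natrD.
  suff -> : (l i + l j = \sum_(t < k.+2) l t)%N by rewrite Zp_sum_l addr0.
  rewrite (bigD1 i) //= (bigD1 j) ?(eq_sym j) //= big1 ?addn0 // => t /andP [ti tj].
  move: ti tj ij; rewrite -!(inj_eq val_inj) /=.
  by have := ltn_ord t; have := ltn_ord i; have := ltn_ord j; lia.
Qed.

Variable i : 'I_k.+2.

Lemma Ecycle_closed (v : 'Z_n) :
  v + ((n %/ gcdn n (l i)) * l i)%N%:R = v.
Proof.
rewrite divn_mulAC ?dvdn_gcdl // -muln_divA ?dvdn_gcdr //.
by rewrite natrM pchar_Zp // mul0r addr0.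
Qed.

Lemma Ecycle_shift_homologous (v : 'Z_n) (j : 'I_k.+2) : i != j ->
  homologous l (Ecycle l i v) (Ecycle l i (v + (l j)%:R)).
Proof.
move=> ij; set q := (n %/ gcdn n (l i))%N.
pose y (m : nat) : 'Z_n := v + (m * l i)%N%:R.
pose a : 'Z_n := (l i)%:R; pose b : 'Z_n := (l j)%:R.
have yS m : y m.+1 = y m + a by rewrite /y /a mulSn natrD; ring.
have y_closed : y q = y 0 by rewrite /y Ecycle_closed mul0n addr0.
exists ([seq (1, (y m, y m + a, y m + a + b)) | m : 'I_q <- index_enum 'I_q] ++
        [seq (-1, (y m, y m + b, y m + b + a)) | m : 'I_q <- index_enum 'I_q]).
split=> [t|p].
  rewrite mem_cat => /orP [] /mapP [m _ ->]; apply: is_face_two_steps => //.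
  by rewrite eq_sym.
 rewrite big_cat !big_map /=.
have -> : Ecycle l i v p - Ecycle l i (v + b) p =
  \sum_(m < q) (edge (y m) (y m + a) p - edge (y m + b) (y m + b + a) p).
  rewrite -sumrB; apply: eq_bigr => m _; rewrite -/(y m) -/(y m.+1) yS.
  by rewrite /y mulSn natrD -/a -/b; congr (edge _ _ p - edge _ _ p); ring.
rewrite (eq_bigr _ (fun (m : 'I_q) _ => edge_parallelogram (y m) a b p)).
rewrite big_split /= -(big_mkord xpredT
  (fun m => edge (y m) (y m + b) p - edge (y m + a) (y m + a + b) p)).
rewrite (@telescope_sumr_eq _ _ _ (fun m => - edge (y m) (y m + b) p)) //;
  last by move=> m _; rewrite yS opprK addrC.
rewrite y_closed subrr addr0 sumrB -sumrN.
by congr (_ + _); apply: eq_bigr => m _; rewrite ?mul1r ?mulN1r.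
Qed.

Definition homologous_shift (x : 'Z_n) :=
  forall v, homologous l (Ecycle l i v) (Ecycle l i (v + x)).

Lemma homologous_shift0 : homologous_shift 0.
Proof. by move=> v; rewrite addr0; exact: homologous_refl. Qed.

Lemma homologous_shiftD x y :
  homologous_shift x -> homologous_shift y -> homologous_shift (x + y).
Proof. by move=> Sx Sy v; rewrite addrA; exact: homologous_trans (Sx v) (Sy _). Qed.

Lemma homologous_shiftN x : homologous_shift x -> homologous_shift (- x).
Proof. by move=> Sx v; apply: homologous_sym; have := Sx (v - x); rewrite subrK. Qed.

Lemma homologous_shift_l j : homologous_shift (l j)%:R.
Proof.
have [<-|ij] := eqVneq i j; last by move=> v; exact: Ecycle_shift_homologous.
have := Zp_sum_l; rewrite (bigD1 i) //= natrD natr_sum => /eqP.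
rewrite addr_eq0 => /eqP ->; apply/homologous_shiftN.
apply: (big_ind homologous_shift homologous_shift0 homologous_shiftD).
by move=> t ti v; apply: Ecycle_shift_homologous; rewrite eq_sym.
Qed.

Lemma Ecycle_homologous_of_reduced : reduced l ->
  forall v w : 'Z_n, homologous l (Ecycle l i v) (Ecycle l i w).
Proof.
move=> l_reduced v w.
have S1 : homologous_shift (1 *+ 1).
  rewrite -l_reduced; apply: closed_mulrn_big_gcdn => [|||j _].
  - exact: homologous_shift0.
  - exact: homologous_shiftD.
  - exact: homologous_shiftN.
  exact: homologous_shift_l.
have := closed_mulrn homologous_shift0 homologous_shiftD (w - v)%R S1 v.
by rewrite natr_Zp addrC subrK.
Qed.

End Tonnetz.

Theorem proposition4p3 (k : nat) (hk : (2 <= k)%N) (l : 'I_k -> nat)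
  (hpos : forall i, (0 < l i)%N) (hgen : generic l) (hred : reduced l)
  (n : nat) (hn : n = (\sum_(i < k) l i)%N) (i : 'I_k) :
  forall v w : 'Z_n, homologous l (Ecycle l i v) (Ecycle l i w).
Proof.
case: k hk l hpos hgen hred hn i => [|[|k]] // _ l hpos _ hred hn i.
apply: Ecycle_homologous_of_reduced => //.
rewrite hn !big_ord_recl /=.
by have := hpos ord0; have := hpos (lift ord0 ord0); lia.
Qed.
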